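(* Let $\mathcal{P}=\{x\in\mathbb{R}^n:\tfrac12(\max_i x_i-\min_i x_i)\le1\}$. Let $x\in\mathcal{P}$, let $\bar F$ be a (closed) face of $\mathcal{P}$, and let $B$ be a stochastic $n\times n$ matrix with all diagonal entries positive. Then $Bx\in\bar F$ implies $x\in\bar F$. Furthermore, for any stochastic $n\times n$ matrices $A$ and $C$, $ABCx\in\bar F$ implies $ACx\in\bar F$.
   Context: A stochastic matrix is a nonnegative matrix whose rows sum to $1$. A face of a polyhedron $\mathcal{Q}$ is a non-empty subset $F$ with $F=\mathcal{Q}$ or $F=\mathcal{Q}\cap\{x:b^\top x=c\}$ where $b^\top x\le c$ for all $x\in\mathcal{Q}$. *)

From mathcomp Require Import all_boot all_order all_algebra.
From mathcomp Require Import reals.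
Set Implicit Arguments. Unset Strict Implicit. Unset Printing Implicit Defensive.
Import Order.TTheory GRing.Theory Num.Theory.
Local Open Scope ring_scope.

Section Defs.
Variable R : realType.
Variable n : nat.

(* max_i x_i and min_i x_i over the n coordinates of x (seeded with the first
   coordinate; for n = 0 both are 0). *)
Definition vmax (x : 'cV[R]_n) : R :=
  \big[Num.max/head 0 [seq x i 0 | i <- enum 'I_n]]_(i < n) x i 0.
Definition vmin (x : 'cV[R]_n) : R :=
  \big[Num.min/head 0 [seq x i 0 | i <- enum 'I_n]]_(i < n) x i 0.

Definition inPolytope (x : 'cV[R]_n) : Prop := (vmax x - vmin x) / 2 <= 1.

Definition dotv (b x : 'cV[R]_n) : R := \sum_(i < n) b i 0 * x i 0.

Definition is_face (F : 'cV[R]_n -> Prop) : Prop :=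
  (exists x, F x) /\
  ((forall x, F x <-> inPolytope x) \/
   exists (b : 'cV[R]_n) (c : R),
     (forall x, inPolytope x -> dotv b x <= c) /\
     (forall x, F x <-> (inPolytope x /\ dotv b x = c))).

Definition stochastic (A : 'M[R]_n) : Prop :=
  (forall i j, 0 <= A i j) /\ (forall i, \sum_(j < n) A i j = 1).

End Defs.

From mathcomp Require Import all_boot all_order all_algebra.
From mathcomp Require Import reals.
From mathcomp Require Import ring lra.
Import Order.TTheory GRing.Theory Num.Theory.
Local Open Scope ring_scope.

(* A stochastic matrix averages coordinates, so it cannot widen the range
   [min_i x_i, max_i x_i] and maps P into itself.  A stochastic B with positive
   diagonal splits as B = d I + (1 - d) M with 0 < d < 1 and M stochastic, so
   ABCx = d ACx + (1 - d) AMCx is a proper convex combination of two points of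
   P.  A face contains no proper convex combination of points of P unless it
   contains both of them, hence ABCx in F forces ACx in F; the first claim is
   the case A = C = 1. *)

Section StochasticPolytope.
Context {R : realType} {n : nat}.

Lemma le_vmax (y : 'cV[R]_n) i : y i 0 <= vmax y.
Proof. by rewrite /vmax (bigD1 i) //= le_max lexx. Qed.

Lemma vmin_le (y : 'cV[R]_n) i : vmin y <= y i 0.
Proof. by rewrite /vmin (bigD1 i) //= ge_min lexx. Qed.

Lemma vmax_le (y : 'cV[R]_n) m :
  (0 < n)%N -> (forall i, y i 0 <= m) -> vmax y <= m.
Proof.
case: n y => // k y _ ym; rewrite /vmax.
apply: (big_ind (fun v => v <= m)) => //.
- by rewrite enum_ordSl /= ym.
- by move=> a b am bm; rewrite ge_max am bm.
Qed.

Lemma vmin_ge (y : 'cV[R]_n) m :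
  (0 < n)%N -> (forall i, m <= y i 0) -> m <= vmin y.
Proof.
case: n y => // k y _ my; rewrite /vmin.
apply: (big_ind (fun v => m <= v)) => //.
- by rewrite enum_ordSl /= my.
- by move=> a b ma mb; rewrite le_min ma mb.
Qed.

Lemma stochastic1 : stochastic (1%:M : 'M[R]_n).
Proof.
split=> [i j|i]; first by rewrite mxE ler0n.
rewrite (bigD1 i) //= big1 ?addr0; first by rewrite mxE eqxx.
by move=> j /negPf; rewrite mxE eq_sym => ->.
Qed.

Lemma stochastic_mulmx_bounds {A : 'M[R]_n} {y : 'cV[R]_n} {lo hi : R} :
  stochastic A -> (forall j, lo <= y j 0 <= hi) ->
  forall i, lo <= (A *m y) i 0 <= hi.
Proof.
move=> [A_ge0 A_sum1] y_bnd i; rewrite mxE.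
have -> : lo = \sum_j A i j * lo by rewrite -mulr_suml A_sum1 mul1r.
have -> : hi = \sum_j A i j * hi by rewrite -mulr_suml A_sum1 mul1r.
apply/andP; split; apply: ler_sum => j _; apply: ler_wpM2l => //;
  by have /andP[] := y_bnd j.
Qed.

Lemma inPolytope_stochastic_mulmx (A : 'M[R]_n) (y : 'cV[R]_n) :
  stochastic A -> inPolytope y -> inPolytope (A *m y).
Proof.
move=> sA; rewrite /inPolytope.
have [n0|n_gt0] := posnP n.
  by rewrite /vmax /vmin; move: A y sA; rewrite n0 => A y _ _;
     rewrite !big_ord0 /= subrr mul0r ler01.
have y_bnd j : vmin y <= y j 0 <= vmax y by rewrite vmin_le le_vmax.
have Ay_bnd := stochastic_mulmx_bounds sA y_bnd.
have max_le : vmax (A *m y) <= vmax y.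
  by apply: vmax_le => // i; have /andP[] := Ay_bnd i.
have min_ge : vmin y <= vmin (A *m y).
  by apply: vmin_ge => // i; have /andP[] := Ay_bnd i.
lra.
Qed.

Lemma dotvD_scale (b u v : 'cV[R]_n) (s t : R) :
  dotv b (s *: u + t *: v) = s * dotv b u + t * dotv b v.
Proof.
rewrite /dotv !mulr_sumr -big_split /=; apply: eq_bigr => i _.
by rewrite !mxE; ring.
Qed.

Lemma face_convex_extremal {F : 'cV[R]_n -> Prop} {u v : 'cV[R]_n} {d : R} :
  is_face F -> inPolytope u -> inPolytope v -> 0 < d < 1 ->
  F (d *: u + (1 - d) *: v) -> F u.
Proof.
move=> [_ [F_P|[b [c [bc_valid F_eq]]]]] Pu Pv /andP[d_gt0 d_lt1].
  by move=> _; apply/F_P.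
move=> /F_eq[_]; rewrite dotvD_scale => on_hyperplane.
apply/F_eq; split => //.
have gap_u : 0 <= d * (c - dotv b u).
  by apply: mulr_ge0; [lra | rewrite subr_ge0 bc_valid].
have gap_v : 0 <= (1 - d) * (c - dotv b v).
  by apply: mulr_ge0; [lra | rewrite subr_ge0 bc_valid].
have gaps0 : d * (c - dotv b u) + (1 - d) * (c - dotv b v) = 0.
  by rewrite -on_hyperplane; ring.
move/eqP: gaps0; rewrite paddr_eq0 // => /andP[/eqP].
by move/eqP; rewrite mulf_eq0 gt_eqF //= subr_eq0 => /eqP ->.
Qed.

Lemma stochastic_shift_diag (B : 'M[R]_n) (d : R) :
  stochastic B -> d < 1 -> (forall i, d <= B i i) ->
  stochastic (\matrix_(i, j) ((B i j - d * (i == j)%:R) / (1 - d))).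
Proof.
move=> [B_ge0 B_sum1] d_lt1 d_le_diag.
split=> [i j|i]; rewrite ?mxE.
  apply: divr_ge0; last lra.
  by case: eqP => [->|_]; rewrite ?mulr1 ?subr_ge0 ?mulr0 ?subr0.
under eq_bigr do rewrite mxE.
rewrite -mulr_suml sumrB -mulr_sumr B_sum1 (bigD1 i) //= big1 ?addr0 ?eqxx.
  by rewrite mulr1 divff //; lra.
by move=> j /negPf; rewrite eq_sym => ->.
Qed.

Lemma stochastic_pos_diag_split {B : 'M[R]_n} :
  stochastic B -> (forall i, 0 < B i i) ->
  exists d (M : 'M[R]_n), [/\ 0 < d < 1, stochastic M &
                            B = d *: 1%:M + (1 - d) *: M].
Proof.
move=> sB diag_gt0.
pose d := Order.min (1 / 2) (\big[Order.min/1]_(i < n) B i i).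
have d_gt0 : 0 < d.
  rewrite lt_min; apply/andP; split; first lra.
  by apply: (big_ind (fun v => 0 < v)) => // a b ? ?; rewrite lt_min; apply/andP.
have d_lt1 : d < 1 by rewrite gt_min; apply/orP; left; lra.
have d_le_diag i : d <= B i i.
  by rewrite ge_min; apply/orP; right; rewrite (bigD1 i) //= ge_min lexx.
exists d, (\matrix_(i, j) ((B i j - d * (i == j)%:R) / (1 - d))).
split; [by rewrite d_gt0 | exact: stochastic_shift_diag |].
apply/matrixP => i j; rewrite !mxE.
by case: eqP => _ /=; field; lra.
Qed.

Lemma face_stochastic_drop {F : 'cV[R]_n -> Prop} {A B : 'M[R]_n} {y : 'cV[R]_n} :
  is_face F -> stochastic A -> stochastic B -> (forall i, 0 < B i i) ->
  inPolytope y -> F (A *m B *m y) -> F (A *m y).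
Proof.
move=> faceF sA sB diag_gt0 Py.
have [d [M [d_range sM ->]]] := stochastic_pos_diag_split sB diag_gt0.
rewrite mulmxDr -!scalemxAr mulmx1 mulmxDl -!scalemxAl -mulmxA.
apply: face_convex_extremal d_range => //; apply: inPolytope_stochastic_mulmx => //.
exact: inPolytope_stochastic_mulmx.
Qed.

End StochasticPolytope.

Theorem lemma6 (R : realType) (n : nat) (x : 'cV[R]_n) (F : 'cV[R]_n -> Prop)
  (B : 'M[R]_n) :
  inPolytope x -> is_face F -> stochastic B -> (forall i, 0 < B i i) ->
  (F (B *m x) -> F x) /\
  (forall A C : 'M[R]_n, stochastic A -> stochastic C ->
     F (A *m B *m C *m x) -> F (A *m C *m x)).
Proof.
move=> Px faceF sB diag_gt0; split.
  have := face_stochastic_drop faceF stochastic1 sB diag_gt0 Px.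
  by rewrite !mul1mx.
move=> A C sA sC FABCx; rewrite -mulmxA.
apply: (face_stochastic_drop faceF sA sB diag_gt0).
  exact: inPolytope_stochastic_mulmx.
by rewrite !mulmxA.
Qed.
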